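(* Let $a\ge 3$ be an integer and let $\mathcal{E}$ be the equation $x+y=az$. Then there is a constant $C_a$ (depending only on $a$) such that for all positive integers $n$: (i) if $a\in\{3,5\}$, then $M_{\mathcal{E}}(n)\le \dfrac{n^2}{4a^2}+C_a n$; (ii) if $a=4$ or $a\ge 6$, then $M_{\mathcal{E}}(n)\le \dfrac{8(2a-1)n^2}{a^4(4+a)}+C_a n$.
   Context: For a positive integer $n$ write $[n]=\{1,\dots,n\}$. A $k$-coloring of $[n]$ is a map $\chi:[n]\to\{0,\dots,k-1\}$. A solution to a 3-variable equation $\mathcal{E}$ in $[n]$ is an ordered triple $(x,y,z)\in[n]^3$ satisfying $\mathcal{E}$; it is monochromatic under $\chi$ if $\chi(x)=\chi(y)=\chi(z)$. $\mu_\chi(\mathcal{E},n,k)$ is the number of monochromatic solutions under $\chi$, $M_{\mathcal{E}}(n,k)=\min_\chi \mu_\chi(\mathcal{E},n,k)$ over all $k$-colorings $\chi$ of $[n]$, and $M_{\mathcal{E}}(n)=M_{\mathcal{E}}(n,2)$. *)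

From mathcomp Require Import all_boot all_order all_algebra.
Set Implicit Arguments. Unset Strict Implicit. Unset Printing Implicit Defensive.

(* [n] = {1,...,n} is represented by 'I_n via i |-> i+1.
   A 2-coloring of [n] is chi : {ffun 'I_n -> bool}. *)

Definition sol_xyaz (a n : nat) (x y z : 'I_n) : bool :=
  (x.+1 + y.+1 == a * z.+1)%N.

Definition mu_xyaz (a n : nat) (chi : {ffun 'I_n -> bool}) : nat :=
  #|[set t : 'I_n * 'I_n * 'I_n |
      sol_xyaz a t.1.1 t.1.2 t.2 && (chi t.1.1 == chi t.1.2) && (chi t.1.2 == chi t.2)]|.

Definition M_xyaz (a n : nat) : nat :=
  \big[minn/@mu_xyaz a n [ffun=> false]]_(chi : {ffun 'I_n -> bool}) mu_xyaz a chi.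

From mathcomp Require Import all_boot all_order all_algebra.
From mathcomp Require Import zify ring.
Set Implicit Arguments. Unset Strict Implicit. Unset Printing Implicit Defensive.
Import Order.TTheory GRing.Theory Num.Theory.

(* The upper bounds come from explicit colourings.  For a >= 4 colour
   [1, k] and (h, n] with one colour and (k, h] with the other, where
   n = a^2 (a + 4) m, k = 4 (a + 1) m and h = 2 a (a + 4) m.  For a = 3, 5
   colour each non-multiple of a by its residue, giving r and a - r different
   colours, and each multiple a U by a colouring of U: then x and y are
   multiples of a in every monochromatic solution, which reduces it to the
   equation U + V = z on the quotients.
   In each case a monochromatic solution is determined by (x, y), and the
   admissible pairs lie in a few blocks of the square; in each row of a block
   the condition a | x + y leaves only about one column in a.  Summing the row
   lengths gives c * mu <= A m^2 + B m, and rounding n up to the next multiple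
   of the period L gives M(n) <= A / (c L^2) * n^2 + O(n).  For a = 3 and 5
   this yields the constants 59/2187 < 1/36 and 6/625 < 1/100. *)

Lemma geq_bigminn (I : eqType) (r : seq I) (F : I -> nat) x0 i :
  i \in r -> \big[minn/x0]_(j <- r) F j <= F i.
Proof.
elim: r => [//|j r IHr]; rewrite inE big_cons => /orP[/eqP->|/IHr].
  exact: geq_minl.
exact: leq_trans (geq_minr _ _).
Qed.

Lemma M_xyaz_le_mu a n (chi : {ffun 'I_n -> bool}) : M_xyaz a n <= mu_xyaz a chi.
Proof. by apply: geq_bigminn; rewrite mem_index_enum. Qed.

Definition coloring_of n (col : nat -> bool) : {ffun 'I_n -> bool} :=
  [ffun x : 'I_n => col x.+1].

(* Monochromatic solutions are counted through the pair of codes of (x, y):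
   z is determined by x + y = a z and [decode] recovers x and y. *)
Lemma mu_xyaz_le_code_pairs a n K (col : nat -> bool) (code decode : nat -> nat)
    (Q : rel nat) :
  0 < a ->
  (forall X Y Z, 0 < X <= n -> 0 < Y <= n -> 0 < Z <= n -> X + Y = a * Z ->
     col X = col Y -> col Y = col Z ->
     [/\ code X <= K, code Y <= K, decode (code X) = X, decode (code Y) = Y
       & Q (code X) (code Y)]) ->
  mu_xyaz a (coloring_of n col) <= \sum_(u < K.+1) \sum_(v < K.+1) Q u v.
Proof.
move=> a_gt0 codeP; rewrite /mu_xyaz.
set S := [set t : 'I_n * 'I_n * 'I_n | _].
pose f (t : 'I_n * 'I_n * 'I_n) : 'I_K.+1 * 'I_K.+1 :=
  (inord (code t.1.1.+1), inord (code t.1.2.+1)).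
have SP t : t \in S -> [/\ code t.1.1.+1 <= K, code t.1.2.+1 <= K,
    decode (code t.1.1.+1) = t.1.1.+1, decode (code t.1.2.+1) = t.1.2.+1
  & Q (code t.1.1.+1) (code t.1.2.+1)] /\ t.1.1.+1 + t.1.2.+1 = a * t.2.+1.
  case: t => [[x y] z]; rewrite inE /sol_xyaz /coloring_of /= !ffunE.
  case/andP=> [/andP[/eqP sol /eqP cxy] /eqP cyz].
  by split => //; apply: (codeP _ _ z.+1); rewrite ?ltn_ord.
have f_inj : {in S &, injective f}.
  move=> [[x1 y1] z1] [[x2 y2] z2] /SP[[Kx1 Ky1 dx1 dy1 _] s1].
  move=> /SP[[Kx2 Ky2 dx2 dy2 _] s2] [/(congr1 val) ex /(congr1 val) ey] /=.
  move: ex ey s1 s2 dx1 dy1 dx2 dy2; rewrite /= !inordK // => ex ey s1 s2.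
  rewrite ex ey => -> -> [ex'] [ey'].
  have ez : z1 = z2 :> nat.
    by apply: succn_inj; apply/eqP; rewrite -(eqn_pmul2l a_gt0) -s1 -s2 ex' ey'.
  by rewrite (val_inj ex') (val_inj ey') (val_inj ez).
rewrite -(card_in_imset f_inj).
have fS : f @: S \subset [set p : 'I_K.+1 * 'I_K.+1 | Q p.1 p.2].
  by apply/subsetP => _ /imsetP[t /SP[[Kx Ky _ _ Qxy] _] ->]; rewrite inE /= !inordK.
apply: leq_trans (subset_leq_card fS) _.
rewrite -sum1_card pair_big /= big_mkcond /=.
by apply: leq_sum => p _; rewrite inE; case: (Q _ _).
Qed.

Lemma sum_dvdn_nat a c lo hi : 0 < a -> lo <= hi ->
  \sum_(lo <= v < hi) (a %| c + v.+1) = (c + hi) %/ a - (c + lo) %/ a.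
Proof.
move=> a_gt0; elim: hi => [|hi IHhi]; first by rewrite leqn0 => /eqP->; rewrite big_geq ?subnn.
rewrite leq_eqVlt => /orP[/eqP->|]; first by rewrite big_geq ?subnn.
rewrite ltnS => lo_hi; rewrite big_nat_recr //= IHhi // addnS divnS //.
have := leq_div2r a (leq_add (leqnn c) lo_hi).
by move: (_ %/ a) (_ %/ a) (nat_of_bool _) => qhi qlo b; lia.
Qed.

Lemma sum_dvdn_nat_le a c lo hi : 0 < a ->
  a * \sum_(lo <= v < hi) (a %| c + v.+1) <= hi - lo + a.
Proof.
move=> a_gt0; have [lo_hi|hi_lo] := leqP lo hi; last by rewrite big_geq //; lia.
rewrite sum_dvdn_nat // mulnBr [a * _]mulnC [a * ((c + lo) %/ a)]mulnC.
have := leq_divM (c + hi) a; have := ltn_ceil (c + lo) a_gt0; rewrite mulSn.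
move: ((c + hi) %/ a * a) ((c + lo) %/ a * a) => qhi qlo; lia.
Qed.

Lemma sum_nat_window K lo hi (F : nat -> nat) :
  \sum_(0 <= u < K | lo <= u < hi) F u = \sum_(lo <= u < minn K hi) F u.
Proof.
elim: K => [|K IHK]; first by rewrite min0n !big_geq.
rewrite big_mkcond big_nat_recr //= -big_mkcond IHK.
have [/andP[loK Khi]|out] := boolP (lo <= K < hi).
  have -> : minn K.+1 hi = K.+1 by lia.
  have -> : minn K hi = K by lia.
  by rewrite big_nat_recr.
rewrite addn0; have [hiK|Khi] := boolP (hi <= K).
  by rewrite (_ : minn K.+1 hi = minn K hi) //; lia.
have lo1 : minn K hi <= lo by lia.
have lo2 : minn K.+1 hi <= lo by lia.
by rewrite !big_geq.
Qed.

Lemma sum_nat_window_le K lo hi (F : nat -> nat) :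
  \sum_(0 <= u < K | lo <= u < hi) F u <= \sum_(lo <= u < hi) F u.
Proof.
rewrite sum_nat_window; have [lo_m|m_lo] := leqP lo (minn K hi); last by rewrite big_geq // ltnW.
by rewrite (big_cat_nat lo_m (geq_minr K hi)) leq_addr.
Qed.

Record block := Block {
  row_lo : nat; row_hi : nat;
  col_lo : nat -> nat; col_hi : nat -> nat; col_shift : nat -> nat }.

Definition in_block a (B : block) u v :=
  [&& row_lo B <= u < row_hi B, col_lo B u <= v < col_hi B u
    & a %| col_shift B u + v.+1].

Definition in_blocks a (Bs : seq block) u v := has (fun B => in_block a B u v) Bs.

Definition blocks_bound a (Bs : seq block) :=
  \sum_(B <- Bs) \sum_(row_lo B <= u < row_hi B) (col_hi B u - col_lo B u + a).

Lemma sum_in_block_le a K B : 0 < a ->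
  a * \sum_(u < K) \sum_(v < K) in_block a B u v <=
  \sum_(row_lo B <= u < row_hi B) (col_hi B u - col_lo B u + a).
Proof.
move=> a_gt0; rewrite big_distrr /=.
rewrite -(big_mkord xpredT (fun u => a * \sum_(v < K) (in_block a B u v : nat))).
apply: leq_trans (sum_nat_window_le K _ _ _); rewrite [X in _ <= X]big_mkcond /=.
apply: leq_sum => u _; rewrite -(big_mkord xpredT (fun v => (in_block a B u v : nat))).
rewrite /in_block; case: (_ <= u < _); last by rewrite big1 ?muln0.
pose F v := (a %| col_shift B u + v.+1 : nat).
apply: leq_trans (sum_dvdn_nat_le _ (col_lo B u) (col_hi B u) a_gt0).
rewrite leq_mul2l; apply/orP; right.
apply: leq_trans (sum_nat_window_le K _ _ F); rewrite [X in _ <= X]big_mkcond /=.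
by apply: leq_sum => v _; case: (_ <= v < _).
Qed.

Lemma sum_in_blocks_le a K Bs : 0 < a ->
  a * \sum_(u < K) \sum_(v < K) in_blocks a Bs u v <= blocks_bound a Bs.
Proof.
move=> a_gt0; apply: leq_trans (_ : a * \sum_(B <- Bs) \sum_(u < K) \sum_(v < K)
    in_block a B u v <= _); last first.
  by rewrite big_distrr /blocks_bound /=; apply: leq_sum => B _; exact: sum_in_block_le.
rewrite leq_mul2l; apply/orP; right.
rewrite [X in _ <= X]exchange_big; apply: leq_sum => u _.
rewrite [X in _ <= X]exchange_big; apply: leq_sum => v _.
rewrite /in_blocks has_count -sum1_count big_mkcond /=.
by case: (\sum_(_ <- _) _).
Qed.

Lemma sum_orb_transpose_le K (P R : rel nat) :
  \sum_(u < K) \sum_(v < K) (P u v || R v u) <=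
  \sum_(u < K) \sum_(v < K) P u v + \sum_(u < K) \sum_(v < K) R u v.
Proof.
rewrite [X in _ <= _ + X]exchange_big -big_split; apply: leq_sum => u _.
by rewrite -big_split; apply: leq_sum => v _; case: (P u v); case: (R v u).
Qed.

Lemma sum_nat_ramp_up lo hi d : lo <= hi ->
  2 * \sum_(lo <= u < hi) (u.+1 - d) + (lo - d) * (lo - d).+1 = (hi - d) * (hi - d).+1.
Proof.
elim: hi => [|hi IHhi]; first by rewrite leqn0 => /eqP->; rewrite big_geq.
rewrite leq_eqVlt => /orP[/eqP->|]; first by rewrite big_geq.
rewrite ltnS => lo_hi; rewrite big_nat_recr //=; have := IHhi lo_hi.
move: (\sum_(lo <= u < hi) _) => s; nia.
Qed.

Lemma sum_nat_ramp_down k d :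
  2 * \sum_(0 <= u < k) (d - u.+1) + minn k d * (minn k d).+1 = 2 * d * minn k d.
Proof.
elim: k => [|k IHk]; first by rewrite min0n big_geq ?muln0.
rewrite big_nat_recr //=; move: (\sum_(0 <= u < k) _) IHk => s; nia.
Qed.

Definition outside k h X := (X <= k) || (h < X).

Definition threshold_lo a m := 4 * (a + 1) * m.
Definition threshold_hi a m := 2 * a * (a + 4) * m.

Definition low_high_block a k h := Block 0 k (fun=> h) (fun u => a * k - u.+1) succn.

Definition threshold_blocks a k h :=
  [:: Block 0 k (fun=> 0) (fun=> k) succn; low_high_block a k h;
      Block k h (fun u => maxn k (a * k - u.+1)) (fun=> h) succn].

Lemma threshold_pair_in_blocks a k h N x y Z :
  0 < a -> 2 * N <= a * h -> a * k <= 2 * h -> x < N -> y < N ->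
  x.+1 + y.+1 = a * Z ->
  outside k h x.+1 = outside k h y.+1 -> outside k h y.+1 = outside k h Z ->
  in_blocks a (threshold_blocks a k h) x y || in_blocks a [:: low_high_block a k h] y x.
Proof.
move=> a_gt0 hN hk xN yN sol cxy cyz.
have dvd_xy : a %| x.+1 + y.+1 by rewrite sol dvdn_mulr.
rewrite /in_blocks /in_block /= dvd_xy addnC dvd_xy.
have Zh : h < Z = false.
  apply/negbTE; rewrite -leqNgt -(leq_pmul2l a_gt0).
  by move: (a * Z) (a * h) sol hN => aZ ah; lia.
move: cyz; rewrite /outside Zh orbF -(@leq_pmul2l a Z k a_gt0) => cyz.
by move: (a * Z) (a * k) sol cxy cyz hk => aZ ak; rewrite /outside; lia.
Qed.

Definition threshold_size a k h :=
  blocks_bound a (threshold_blocks a k h) + blocks_bound a [:: low_high_block a k h].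

Lemma threshold_mu_le_size a k h N n :
  0 < a -> n <= N -> 2 * N <= a * h -> a * k <= 2 * h ->
  a * mu_xyaz a (coloring_of n (outside k h)) <= threshold_size a k h.
Proof.
move=> a_gt0 nN hN hk.
pose Q u v := in_blocks a (threshold_blocks a k h) u v ||
              in_blocks a [:: low_high_block a k h] v u.
have mu_le : mu_xyaz a (coloring_of n (outside k h)) <=
    \sum_(u < N.+1) \sum_(v < N.+1) Q u v.
  apply: (@mu_xyaz_le_code_pairs a n N (outside k h) predn succn Q) => //.
  move=> [|X] [|Y] Z //= X_n Y_n _ sol cXY cYZ.
  have [XN YN] : X < N /\ Y < N by lia.
  by split; [exact: ltnW | exact: ltnW | | |
    exact: (threshold_pair_in_blocks a_gt0 hN hk XN YN sol cXY cYZ)].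
apply: leq_trans (leq_mul (leqnn a) (leq_trans mu_le (sum_orb_transpose_le _ _ _))) _.
by rewrite mulnDr leq_add ?sum_in_blocks_le.
Qed.

Lemma threshold_sizeE a k h :
  threshold_size a k h =
  k * (k + a) + 2 * (\sum_(0 <= u < k) (a * k - h - u.+1) + k * a) +
  (\sum_(k <= u < h) (h - maxn k (a * k - u.+1)) + (h - k) * a).
Proof.
rewrite /threshold_size /blocks_bound !big_cons !big_nil /= !addn0 !big_split /=.
rewrite !sum_nat_const_nat !subn0.
by under eq_bigr do rewrite subnAC; ring.
Qed.

Lemma threshold_size_ge5 a m : 5 <= a ->
  2 * threshold_size a (threshold_lo a m) (threshold_hi a m) <=
  16 * a * (2 * a - 1) * (a + 4) * m ^ 2 + 16 * a ^ 3 * m.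
Proof.
move=> a5; rewrite threshold_sizeE /threshold_lo /threshold_hi.
set k := 4 * (a + 1) * m; set h := 2 * a * (a + 4) * m.
have [c ea] : exists c, a = c + 5 by exists (a - 5); lia.
have ed : a * k - h = 2 * a * (c + 3) * m by rewrite /k /h ea; nia.
have ramp3 : \sum_(k <= u < h) (h - maxn k (a * k - u.+1)) =
             \sum_(k <= u < h) (u.+1 - (a * k - h)).
  by apply: eq_big_nat => u /andP[ku uh]; rewrite /k /h ea in ku uh *; nia.
have kh : k <= h by rewrite /k /h ea; nia.
have := sum_nat_ramp_down k (a * k - h); have := sum_nat_ramp_up (a * k - h) kh.
rewrite ramp3 ed; move: (\sum_(0 <= u < k) _) (\sum_(k <= u < h) _) => s2 s3.
have -> : minn k (2 * a * (c + 3) * m) = k by rewrite /k ea; nia.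
have -> : k - 2 * a * (c + 3) * m = 0 by rewrite /k ea; nia.
have -> : h - 2 * a * (c + 3) * m = 12 * a * m by rewrite /h ea; nia.
have -> : h - k = 2 * (c * c + 12 * c + 33) * m by rewrite /h /k ea; nia.
have -> : 2 * a - 1 = 2 * c + 9 by rewrite ea; lia.
by rewrite /k ea; nia.
Qed.

(* Unlike for a >= 5, here h + k > a k: the lower column bound of the last
   block switches from a k - u - 1 to k at u = 3 k. *)
Lemma threshold_size_4 m :
  2 * threshold_size 4 (threshold_lo 4 m) (threshold_hi 4 m) <=
  16 * 4 * (2 * 4 - 1) * (4 + 4) * m ^ 2 + 16 * 4 ^ 3 * m.
Proof.
rewrite threshold_sizeE /threshold_lo /threshold_hi.
have -> : 4 * (4 + 1) * m = 20 * m by lia.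
have -> : 2 * 4 * (4 + 4) * m = 64 * m by lia.
have -> : 4 * (20 * m) - 64 * m = 16 * m by lia.
have [m20 m60] : 20 * m <= 60 * m /\ 60 * m <= 64 * m by lia.
rewrite (big_cat_nat m20 m60) /=.
have -> : \sum_(20 * m <= u < 60 * m) (64 * m - maxn (20 * m) (4 * (20 * m) - u.+1)) =
          \sum_(20 * m <= u < 60 * m) (u.+1 - 16 * m).
  by apply: eq_big_nat => u /andP[lo hi]; lia.
have -> : \sum_(60 * m <= u < 64 * m) (64 * m - maxn (20 * m) (4 * (20 * m) - u.+1)) =
          \sum_(60 * m <= u < 64 * m) (44 * m).
  by apply: eq_big_nat => u /andP[lo hi]; lia.
have := sum_nat_ramp_down (20 * m) (16 * m); have := sum_nat_ramp_up (16 * m) m20.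
rewrite sum_nat_const_nat.
move: (\sum_(0 <= u < 20 * m) _) (\sum_(20 * m <= u < 60 * m) _) => s2 s3.
have -> : minn (20 * m) (16 * m) = 16 * m by lia.
have -> : 20 * m - 16 * m = 4 * m by lia.
have -> : 60 * m - 16 * m = 44 * m by lia.
have -> : 64 * m - 20 * m = 44 * m by lia.
have -> : 64 * m - 60 * m = 4 * m by lia.
nia.
Qed.

Lemma threshold_size_le a m : 4 <= a ->
  2 * threshold_size a (threshold_lo a m) (threshold_hi a m) <=
  16 * a * (2 * a - 1) * (a + 4) * m ^ 2 + 16 * a ^ 3 * m.
Proof.
by rewrite leq_eqVlt => /orP[/eqP <-|]; [exact: threshold_size_4 | exact: threshold_size_ge5].
Qed.

Lemma mu_xyaz_threshold_le a m n : 4 <= a -> n <= a ^ 2 * (a + 4) * m ->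
  2 * a * mu_xyaz a (coloring_of n (outside (threshold_lo a m) (threshold_hi a m))) <=
  16 * a * (2 * a - 1) * (a + 4) * m ^ 2 + 16 * a ^ 3 * m.
Proof.
move=> a4 nN; apply: leq_trans (threshold_size_le m a4); rewrite -mulnA leq_mul2l /=.
apply: (threshold_mu_le_size _ nN); rewrite /threshold_lo /threshold_hi; first by lia.
- by apply: eq_leq; ring.
- by nia.
Qed.

Definition residue_coloring a (quot_col res_col : nat -> bool) X :=
  if a %| X then quot_col (X %/ a) else res_col (X %% a).

Lemma residue_coloring_mono_dvdn a (quot_col res_col : nat -> bool) X Y : 0 < a ->
  (forall s, 0 < s < a -> res_col s != res_col (a - s)) ->
  a %| X + Y ->
  residue_coloring a quot_col res_col X = residue_coloring a quot_col res_col Y ->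
  a %| X.
Proof.
move=> a_gt0 res_opp dvd_XY /eqP; apply: contraTT => ndvd_X.
have ndvd_Y : ~~ (a %| Y).
  by apply: contra ndvd_X => dvd_Y; rewrite -(dvdn_addl X dvd_Y).
have [X_pos Y_pos] : 0 < X %% a /\ 0 < Y %% a.
  by rewrite !lt0n; split; [exact: ndvd_X | exact: ndvd_Y].
have sum_res : X %% a + Y %% a = a.
  have /dvdnP[k ek] : a %| X %% a + Y %% a by rewrite /dvdn modnDm.
  have := ltn_pmod X a_gt0; have := ltn_pmod Y a_gt0.
  by case: k ek => [|[|k]] ek; rewrite ?mulSn in ek; lia.
rewrite /residue_coloring (negbTE ndvd_X) (negbTE ndvd_Y).
have -> : Y %% a = a - X %% a by lia.
by rewrite res_opp // X_pos ltn_pmod.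
Qed.

Lemma residue_mu_le a n N (quot_col res_col : nat -> bool) (Q : rel nat) :
  0 < a -> n <= a * N ->
  (forall s, 0 < s < a -> res_col s != res_col (a - s)) ->
  (forall U V, 0 < U <= N -> 0 < V <= N -> quot_col U = quot_col V ->
     quot_col V = residue_coloring a quot_col res_col (U + V) -> Q U.-1 V.-1) ->
  mu_xyaz a (coloring_of n (residue_coloring a quot_col res_col)) <=
  \sum_(u < N.+1) \sum_(v < N.+1) Q u v.
Proof.
move=> a_gt0 nN res_opp QP.
apply: (@mu_xyaz_le_code_pairs a n N _ (fun X => (X %/ a).-1) (fun u => a * u.+1)) => //.
move=> X Y Z /andP[X_gt0 X_n] /andP[Y_gt0 Y_n] _ sol cXY cYZ.
have dvd_XY : a %| X + Y by rewrite sol dvdn_mulr.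
have dvd_X := residue_coloring_mono_dvdn a_gt0 res_opp dvd_XY cXY.
have dvd_Y : a %| Y by rewrite -(dvdn_addr _ dvd_X).
have col_mul W : a %| W -> residue_coloring a quot_col res_col W = quot_col (W %/ a).
  by move=> dvd_W; rewrite /residue_coloring dvd_W.
rewrite (col_mul X) // (col_mul Y) // in cXY; rewrite (col_mul Y) // in cYZ.
case/dvdnP: dvd_X X_gt0 X_n cXY sol => U ->; case/dvdnP: dvd_Y Y_gt0 Y_n cYZ => V ->.
rewrite !mulnK // !muln_gt0 a_gt0 !andbT => U_gt0 V_n cVZ V_gt0 U_n cUV sol.
have UN : U <= N by rewrite -(leq_pmul2r a_gt0) (leq_trans U_n) // mulnC.
have VN : V <= N by rewrite -(leq_pmul2r a_gt0) (leq_trans V_n) // mulnC.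
have eZ : Z = U + V by apply/eqP; rewrite -(eqn_pmul2l a_gt0) -sol mulnDr !(mulnC a).
rewrite eZ in cVZ; rewrite !prednK // !(mulnC a).
by split; [exact: leq_trans (leq_pred U) UN | exact: leq_trans (leq_pred V) VN | | |
  apply: QP; rewrite ?U_gt0 ?V_gt0].
Qed.

Lemma dvdn_add3_residue a x y q r s : x + y = q * a + r -> r < a -> s < a ->
  (a %| x + s + y) = (r + s == 0) || (r + s == a).
Proof.
move=> exy r_lt s_lt; rewrite addnAC exy -addnA dvdn_addr ?dvdn_mull //.
apply/dvdnP/orP => [[k ek]|[/eqP->|/eqP->]]; last 2 first.
- by exists 0.
- by exists 1; rewrite mul1n.
by case: k ek => [|[|k]] ek; rewrite ?mulSn in ek; [left | right |]; lia.
Qed.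

(* Proves membership in a list of blocks by trying its blocks in turn, so that
   each [lia] sees a single block; one [lia] on the whole disjunction produces
   proof terms that are very expensive for the kernel to re-check. *)
Local Ltac pick_block_from i eUV r_lt :=
  first [ by exists i; [| rewrite /in_block /= !prednK // (dvdn_add3_residue eUV r_lt) //; lia]
        | match i with 7 => fail 1 | _ => pick_block_from (S i) eUV r_lt end ].

Definition rect_block row_lo row_hi col_lo col_hi s :=
  Block row_lo row_hi (fun=> col_lo) (fun=> col_hi) (fun u => u.+1 + s).

Definition coloring5 m := residue_coloring 5 (fun U => U <= 2 * m) (fun s => s <= 2).

Definition blocks5 m :=
  [:: rect_block 0 (2 * m) 0 (2 * m) 0; rect_block 0 (2 * m) 0 (2 * m) 4;
      rect_block 0 (2 * m) 0 (2 * m) 3; rect_block (2 * m) (5 * m) (2 * m) (5 * m) 2;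
      rect_block (2 * m) (5 * m) (2 * m) (5 * m) 1].

Lemma mono5_pair_in_blocks m U V : 0 < U <= 5 * m -> 0 < V <= 5 * m ->
  (U <= 2 * m) = (V <= 2 * m) -> (V <= 2 * m) = coloring5 m (U + V) ->
  in_blocks 5 (blocks5 m) U.-1 V.-1.
Proof.
move=> /andP[U_gt0 U_le] /andP[V_gt0 V_le] cUV cVZ.
apply/(has_nthP (rect_block 0 0 0 0 0)).
rewrite /coloring5 /residue_coloring /dvdn in cVZ; move: cUV cVZ.
have := ltn_pmod (U + V) (isT : 0 < 5); have := divn_eq (U + V) 5.
move: ((U + V) %/ 5) ((U + V) %% 5) => q r eUV r_lt.
case: (leqP V (2 * m)) => hV cUV;
  case: r r_lt eUV => [|[|[|[|[|r]]]]] // r_lt eUV /= cVZ;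
  first [by exfalso; lia | pick_block_from 0 eUV r_lt].
Qed.

Lemma blocks5_bound m : blocks_bound 5 (blocks5 m) = 30 * m ^ 2 + 60 * m.
Proof. by rewrite /blocks_bound !big_cons big_nil /= !sum_nat_const_nat; lia. Qed.

Lemma mu_xyaz5_le m n : n <= 25 * m ->
  5 * mu_xyaz 5 (coloring_of n (coloring5 m)) <= 30 * m ^ 2 + 60 * m.
Proof.
move=> n_le; have n_le' : n <= 5 * (5 * m) by rewrite mulnA.
have res_opp s : 0 < s < 5 -> (s <= 2) != (5 - s <= 2) by case: s => [|[|[|[|[|]]]]].
rewrite -blocks5_bound; apply: leq_trans (@sum_in_blocks_le 5 _ (blocks5 m) isT).
rewrite leq_mul2l; apply/orP; right.
exact: residue_mu_le _ n_le' res_opp (@mono5_pair_in_blocks m).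
Qed.

Definition coloring3 m :=
  residue_coloring 3 (fun U => (U <= 2 * m) || (6 * m < U)) (fun s => s == 1).

Definition blocks3 m :=
  [:: rect_block 0 (2 * m) 0 (2 * m) 2; rect_block (6 * m) (9 * m) 0 (2 * m) 2;
      rect_block 0 (2 * m) (6 * m) (9 * m) 2; rect_block (6 * m) (9 * m) (6 * m) (9 * m) 2;
      rect_block 0 (2 * m) 0 (2 * m) 0; rect_block (2 * m) (6 * m) (2 * m) (6 * m) 1;
      Block (2 * m) (6 * m) (fun u => maxn (2 * m) (6 * m - u.+1)) (fun=> 6 * m)
        (fun u => u.+1 + 0)].

Lemma mono3_pair_in_blocks m U V : 0 < U <= 9 * m -> 0 < V <= 9 * m ->
  (U <= 2 * m) || (6 * m < U) = (V <= 2 * m) || (6 * m < V) ->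
  (V <= 2 * m) || (6 * m < V) = coloring3 m (U + V) ->
  in_blocks 3 (blocks3 m) U.-1 V.-1.
Proof.
move=> /andP[U_gt0 U_le] /andP[V_gt0 V_le] cUV cVZ.
apply/(has_nthP (rect_block 0 0 0 0 0)).
rewrite /coloring3 /residue_coloring /dvdn in cVZ; move: cUV cVZ.
have := ltn_pmod (U + V) (isT : 0 < 3); have := divn_eq (U + V) 3.
move: ((U + V) %/ 3) ((U + V) %% 3) => q r eUV r_lt.
case: (boolP ((V <= 2 * m) || (6 * m < V))) => cV cUV;
  case: r r_lt eUV => [|[|[|r]]] // r_lt eUV /= cVZ;
  try case/orP: cV => cV; try move/orP: cUV => [cUV|cUV];
  first [by exfalso; lia | pick_block_from 0 eUV r_lt].
Qed.

Lemma blocks3_bound m : blocks_bound 3 (blocks3 m) = 59 * m ^ 2 + 61 * m.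
Proof.
rewrite /blocks_bound !big_cons big_nil /= !sum_nat_const_nat big_split /= sum_nat_const_nat.
have [m24 m46] : 2 * m <= 4 * m /\ 4 * m <= 6 * m by lia.
rewrite (big_cat_nat m24 m46) /=.
have -> : \sum_(2 * m <= u < 4 * m) (6 * m - maxn (2 * m) (6 * m - u.+1)) =
          \sum_(2 * m <= u < 4 * m) (u.+1 - 0).
  by apply: eq_big_nat => u /andP[lo hi]; lia.
have -> : \sum_(4 * m <= u < 6 * m) (6 * m - maxn (2 * m) (6 * m - u.+1)) =
          \sum_(4 * m <= u < 6 * m) (4 * m).
  by apply: eq_big_nat => u /andP[lo hi]; lia.
have := sum_nat_ramp_up 0 m24; rewrite sum_nat_const_nat !subn0.
move: (\sum_(2 * m <= u < 4 * m) _) => s; nia.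
Qed.

Lemma mu_xyaz3_le m n : n <= 27 * m ->
  3 * mu_xyaz 3 (coloring_of n (coloring3 m)) <= 59 * m ^ 2 + 61 * m.
Proof.
move=> n_le; have n_le' : n <= 3 * (9 * m) by rewrite mulnA.
have res_opp s : 0 < s < 3 -> (s == 1) != (3 - s == 1) by case: s => [|[|[|]]].
rewrite -blocks3_bound; apply: leq_trans (@sum_in_blocks_le 3 _ (blocks3 m) isT).
rewrite leq_mul2l; apply/orP; right.
exact: residue_mu_le _ n_le' res_opp (@mono3_pair_in_blocks m).
Qed.

Lemma quadratic_bound_of_scaled_bound (f : nat -> nat) L c A B : 0 < L ->
    (forall m n, n <= L * m -> c * f n <= A * m ^ 2 + B * m) ->
  forall n, 0 < n ->
  c * L ^ 2 * f n <= A * n ^ 2 + (A * (2 * L + L ^ 2) + 2 * B * L ^ 2) * n.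
Proof.
move=> L_gt0 f_le n n_gt0; pose m := n %/ L + 1.
have n_Lm : n <= L * m by have := ltn_ceil n L_gt0; rewrite /m; lia.
have Lm_n : L * m <= n + L by have := leq_divM n L; rewrite /m; lia.
have m_n : m <= 2 * n by have := leq_div n L; rewrite /m; lia.
have scaled : c * L ^ 2 * f n <= A * (L * m) ^ 2 + B * L ^ 2 * m.
  rewrite (mulnC c) -mulnA; apply: leq_trans (leq_mul (leqnn (L ^ 2)) (f_le m n n_Lm)) _.
  by apply: eq_leq; ring.
have sq : (L * m) ^ 2 <= n ^ 2 + (2 * L + L ^ 2) * n.
  apply: leq_trans (_ : _ <= (n + L) ^ 2) _; first by rewrite leq_sqr.
  by have := leq_pmulr (L ^ 2) n_gt0; rewrite sqrnD mulnDl; lia.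
apply: leq_trans scaled _.
apply: leq_trans (leq_add (leq_mul (leqnn A) sq) (leq_mul (leqnn (B * L ^ 2)) m_n)) _.
by apply: eq_leq; ring.
Qed.

Local Open Scope ring_scope.

Lemma rat_quadratic_bound (f : nat -> nat) L c A B p q :
    (0 < L)%N -> (0 < c)%N -> (0 < q)%N -> (q * A <= p * (c * L ^ 2))%N ->
    (forall m n, n <= L * m -> c * f n <= A * m ^ 2 + B * m)%N ->
  exists C : rat, forall n, (0 < n)%N ->
    (f n)%:R <= p%:R / q%:R * (n ^ 2)%:R + C * n%:R.
Proof.
move=> L_gt0 c_gt0 q_gt0 coef f_le.
set E := (A * (2 * L + L ^ 2) + 2 * B * L ^ 2)%N; set D := (c * L ^ 2)%N.
have D_gt0 : 0 < D%:R :> rat by rewrite ltr0n muln_gt0 c_gt0 expn_gt0 L_gt0.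
exists (E%:R / D%:R) => n n_gt0.
have fD := quadratic_bound_of_scaled_bound L_gt0 f_le n_gt0.
rewrite -/D -/E -(ler_nat rat) natrD (natrM _ D) (natrM _ A) (natrM _ E) in fD.
have AD : A%:R / D%:R <= p%:R / q%:R :> rat.
  by rewrite ler_pdivrMr // mulrAC ler_pdivlMr ?ltr0n // -!natrM ler_nat mulnC.
apply: le_trans (_ : _ <= A%:R / D%:R * (n ^ 2)%:R + E%:R / D%:R * n%:R) _; last first.
  by rewrite lerD2r ler_wpM2r.
by rewrite mulrAC [E%:R / _ * _]mulrAC -mulrDl ler_pdivlMr // mulrC.
Qed.


Lemma M_xyaz3_bound : exists C : rat, forall n, (0 < n)%N ->
  (M_xyaz 3 n)%:R <= (n ^ 2)%:R / (4 * (3 ^ 2)%:R) + C * n%:R.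
Proof.
have [|C HC] := @rat_quadratic_bound (M_xyaz 3) 27 3 59 61 1 36 isT isT isT isT.
  by move=> m n /mu_xyaz3_le; apply: leq_trans; rewrite leq_mul2l M_xyaz_le_mu orbT.
by exists C => n /HC; rewrite mul1r mulrC -natrM.
Qed.

Lemma M_xyaz5_bound : exists C : rat, forall n, (0 < n)%N ->
  (M_xyaz 5 n)%:R <= (n ^ 2)%:R / (4 * (5 ^ 2)%:R) + C * n%:R.
Proof.
have [|C HC] := @rat_quadratic_bound (M_xyaz 5) 25 5 30 60 1 100 isT isT isT isT.
  by move=> m n /mu_xyaz5_le; apply: leq_trans; rewrite leq_mul2l M_xyaz_le_mu orbT.
by exists C => n /HC; rewrite mul1r mulrC -natrM.
Qed.

Lemma M_xyaz_threshold_bound a : (4 <= a)%N -> exists C : rat, forall n, (0 < n)%N ->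
  (M_xyaz a n)%:R <=
    8 * (2 * a%:R - 1) * (n ^ 2)%:R / ((a ^ 4)%:R * (4 + a%:R)) + C * n%:R.
Proof.
move=> a4.
have [|||||C HC] := @rat_quadratic_bound (M_xyaz a) (a ^ 2 * (a + 4)) (2 * a)
  (16 * a * (2 * a - 1) * (a + 4)) (16 * a ^ 3) (8 * (2 * a - 1)) (a ^ 4 * (a + 4)).
- by rewrite muln_gt0 expn_gt0; lia.
- by lia.
- by rewrite muln_gt0 expn_gt0; lia.
- by apply: eq_leq; ring.
- by move=> m n /(mu_xyaz_threshold_le a4); apply: leq_trans; rewrite leq_mul2l M_xyaz_le_mu orbT.
have coef : (8 * (2 * a - 1))%:R / (a ^ 4 * (a + 4))%:R =
             8 * (2 * a%:R - 1) / ((a ^ 4)%:R * (4 + a%:R)) :> rat.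
  by rewrite (natrM _ 8) natrB ?(natrM _ 2) ?(natrM _ (a ^ 4)) ?natrD ?(addrC a%:R) //; lia.
by exists C => n /HC; rewrite coef mulrAC.
Qed.

Theorem theorem3 (a : nat) (ha : (3 <= a)%N) :
  exists C : rat, forall n : nat, (0 < n)%N ->
    ((a == 3%N) || (a == 5%N) ->
       (M_xyaz a n)%:R <= (n ^ 2)%:R / (4 * (a ^ 2)%:R) + C * n%:R) /\
    ((a == 4%N) || (6 <= a)%N ->
       (M_xyaz a n)%:R <=
         8 * (2 * a%:R - 1) * (n ^ 2)%:R / ((a ^ 4)%:R * (4 + a%:R)) + C * n%:R).
Proof.
have [a35|a_not35] := boolP ((a == 3%N) || (a == 5%N)).
  have [C HC] : exists C : rat, forall n, (0 < n)%N ->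
      (M_xyaz a n)%:R <= (n ^ 2)%:R / (4 * (a ^ 2)%:R) + C * n%:R.
    by case/orP: a35 => /eqP ->; [exact: M_xyaz3_bound | exact: M_xyaz5_bound].
  have not46 : ~~ ((a == 4%N) || (6 <= a)%N) by case/orP: a35 => /eqP->.
  by exists C => n n_gt0; split => [_|/(negP not46) []]; exact: HC.
have a4 : (4 <= a)%N by move: a_not35; case: a ha => [|[|[|[|]]]].
have [C HC] := M_xyaz_threshold_bound a4.
by exists C => n n_gt0; split => [//|_]; exact: HC.
Qed.
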